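(* Let $F=\{f_i\}_{i=1}^N$ be a tight frame for an $n$-dimensional Hilbert space $\mathcal{H}_n$ and let $p>1$. If $S_F^{-1}F\in\zeta_{\mathcal{N}}^{(1),p}(F)$, then $S_F^{-1}F\in\zeta_{\mathfrak{F}}^{(1),p}(F)$.
   Context: $F$ is tight if $\sum_i|\langle f,f_i\rangle|^2=A\|f\|^2$ for all $f$ and some $A>0$; $S_F$ is the frame operator $S_Ff=\sum_i\langle f,f_i\rangle f_i$ and $S_F^{-1}F=\{S_F^{-1}f_i\}$ the canonical dual. $G=\{g_i\}$ is a dual of $F$ if $f=\sum_i\langle f,f_i\rangle g_i$ for all $f$. For a dual $G$: $\mathrm{AE}_{\mathfrak{F}}^{(1),p}(F,G)=\{\frac1N\sum_i(\|f_i\|\|g_i\|)^p\}^{1/p}$ (the $\ell^p$-average of Frobenius norms of the one-erasure error operators $f\mapsto\langle f,f_i\rangle g_i$), and $\mathrm{AE}_{\mathcal{N}}^{(1),p}(F,G)=\{\frac1N\sum_i\omega(E_i)^p\}^{1/p}$ where $E_if=\langle f,f_i\rangle g_i$ and $\omega(T)=\sup_{\|f\|=1}|\langle Tf,f\rangle|$ is the numerical radius (so $\omega(E_i)=\frac{|\langle f_i,g_i\rangle|+\|f_i\|\|g_i\|}{2}$). $\zeta_{\mathfrak{F}}^{(1),p}(F)$ (resp. $\zeta_{\mathcal{N}}^{(1),p}(F)$) is the set of duals of $F$ minimizing $\mathrm{AE}_{\mathfrak{F}}^{(1),p}(F,\cdot)$ (resp. $\mathrm{AE}_{\mathcal{N}}^{(1),p}(F,\cdot)$)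 over all duals. *)

From HB Require Import structures.
From mathcomp Require Import all_boot all_order all_algebra.
From mathcomp Require Import all_classical all_reals.
From mathcomp Require Import exp.
From mathcomp Require Import complex.
Set Implicit Arguments. Unset Strict Implicit. Unset Printing Implicit Defensive.
Import Order.TTheory GRing.Theory Num.Theory.
Local Open Scope ring_scope.
Local Open Scope classical_set_scope.

Section FrameDefs.
Variable R : realType.
Local Notation C := (R[i]).

Definition ip n (x y : 'cV[C]_n) : C := \sum_(k < n) x k 0 * Num.conj (y k 0).

Definition vnorm n (x : 'cV[C]_n) : R := Num.sqrt (\sum_(k < n) Normc.normc (x k 0) ^+ 2).

Definition tight_frame n N (F : 'I_N -> 'cV[C]_n) : Prop :=
  exists A : R, 0 < A /\
    forall f : 'cV[C]_n, \sum_(i < N) Normc.normc (ip f (F i)) ^+ 2 = A * vnorm f ^+ 2.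

(* frame operator S_F f = sum_i <f,f_i> f_i, as an n x n matrix *)
Definition frame_op n N (F : 'I_N -> 'cV[C]_n) : 'M[C]_n :=
  \sum_(i < N) (F i *m (map_mx Num.conj (F i))^T).

Definition canonical_dual n N (F : 'I_N -> 'cV[C]_n) : 'I_N -> 'cV[C]_n :=
  fun i => invmx (frame_op F) *m F i.

Definition is_dual n N (F G : 'I_N -> 'cV[C]_n) : Prop :=
  forall f : 'cV[C]_n, f = \sum_(i < N) ip f (F i) *: G i.

(* one-erasure error operator E_i f = <f,f_i> g_i, as a matrix *)
Definition erasure_op n (fi gi : 'cV[C]_n) : 'M[C]_n :=
  gi *m (map_mx Num.conj fi)^T.

Definition numrad n (T : 'M[C]_n) : R :=
  sup [set Normc.normc (ip (T *m f) f) | f in [set f : 'cV[C]_n | vnorm f = 1]].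

Definition AE_frob (p : R) n N (F G : 'I_N -> 'cV[C]_n) : R :=
  (N%:R^-1 * \sum_(i < N) (vnorm (F i) * vnorm (G i)) `^ p) `^ p^-1.

Definition AE_num (p : R) n N (F G : 'I_N -> 'cV[C]_n) : R :=
  (N%:R^-1 * \sum_(i < N) numrad (erasure_op (F i) (G i)) `^ p) `^ p^-1.

End FrameDefs.

Definition zeta_frob (R : realType) (p : R) n N (F G : 'I_N -> 'cV[R[i]]_n) : Prop :=
  is_dual F G /\ forall G', is_dual F G' -> AE_frob p F G <= AE_frob p F G'.

Definition zeta_num (R : realType) (p : R) n N (F G : 'I_N -> 'cV[R[i]]_n) : Prop :=
  is_dual F G /\ forall G', is_dual F G' -> AE_num p F G <= AE_num p F G'.

From mathcomp Require Import all_boot all_order all_algebra.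
From mathcomp Require Import all_classical all_reals exp complex.
From mathcomp Require Import ring.
Set Implicit Arguments. Unset Strict Implicit. Unset Printing Implicit Defensive.
Import Order.TTheory GRing.Theory Num.Theory.
Local Open Scope ring_scope.
Local Open Scope complex_scope.
Local Open Scope classical_set_scope.

(* For a tight frame with bound A the frame operator is A I, so the canonical
   dual is A^-1 F and every one-erasure operator f |-> <f, f_i> A^-1 f_i is
   positive: its numerical radius is attained at f_i / ||f_i|| and equals
   ||f_i|| ||A^-1 f_i||.  For an arbitrary dual G, Cauchy-Schwarz bounds the
   numerical radius of f |-> <f, f_i> g_i by ||f_i|| ||g_i||.  Hence
   AE_F(F, S^-1 F) = AE_N(F, S^-1 F) <= AE_N(F, G) <= AE_F(F, G). *)

Lemma sum_mul_sqr_le (R : realFieldType) n (a b : 'I_n -> R) :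
  (\sum_k a k * b k) ^+ 2 <= (\sum_k a k ^+ 2) * (\sum_k b k ^+ 2).
Proof.
pose d j k := a j ^+ 2 * b k ^+ 2 - a j * b j * (a k * b k).
have sum_d : \sum_j \sum_k d j k =
            (\sum_k a k ^+ 2) * (\sum_k b k ^+ 2) - (\sum_k a k * b k) ^+ 2.
  rewrite expr2 !big_distrlr -sumrB; apply: eq_bigr => j _.
  by rewrite -sumrB.
have lagrange : \sum_j \sum_k (a j * b k - a k * b j) ^+ 2 =
                (\sum_j \sum_k d j k) *+ 2.
  rewrite mulr2n [X in _ = _ + X]exchange_big -big_split /=.
  apply: eq_bigr => j _; rewrite -big_split /=.
  by apply: eq_bigr => k _; rewrite /d; ring.
rewrite -subr_ge0 -sum_d -(pmulrn_lge0 _ (ltn0Sn 1)) -lagrange.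
by apply: sumr_ge0 => j _; apply: sumr_ge0 => k _; exact: sqr_ge0.
Qed.

Section InnerProduct.
Variable R : realType.
Local Notation C := (R[i]).
Local Notation normc := (@Normc.normc R).
Variable n : nat.
Implicit Types (x y z : 'cV[C]_n) (c : C).

Lemma ipDl x y z : ip (x + y) z = ip x z + ip y z.
Proof. by rewrite /ip -big_split; apply: eq_bigr => k _; rewrite mxE mulrDl. Qed.

Lemma ipBl x y z : ip (x - y) z = ip x z - ip y z.
Proof. by rewrite /ip -sumrB; apply: eq_bigr => k _; rewrite !mxE mulrBl. Qed.

Lemma ipZl c x z : ip (c *: x) z = c * ip x z.
Proof. by rewrite /ip mulr_sumr; apply: eq_bigr => k _; rewrite mxE mulrA. Qed.

Lemma conj_ip x y : Num.conj (ip x y) = ip y x.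
Proof.
rewrite /ip rmorph_sum; apply: eq_bigr => k _.
by rewrite rmorphM /= conjCK mulrC.
Qed.

Lemma ipDr x y z : ip z (x + y) = ip z x + ip z y.
Proof. by rewrite -conj_ip ipDl rmorphD /= !conj_ip. Qed.

Lemma ipZr c x z : ip z (c *: x) = Num.conj c * ip z x.
Proof. by rewrite -conj_ip ipZl rmorphM /= !conj_ip. Qed.

Lemma ip_suml I (r : seq I) (P : pred I) (v : I -> 'cV[C]_n) y :
  ip (\sum_(i <- r | P i) v i) y = \sum_(i <- r | P i) ip (v i) y.
Proof.
rewrite /ip; under eq_bigr do rewrite summxE mulr_suml.
by rewrite exchange_big.
Qed.

Lemma ip_delta x j : ip x (delta_mx j 0) = x j 0.
Proof.
rewrite /ip (bigD1 j) //= big1 ?addr0; first by rewrite mxE !eqxx conjC1 mulr1.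
by move=> k /negbTE kj; rewrite mxE kj conjC0 mulr0.
Qed.

Lemma normc_ge0 c : 0 <= normc c.
Proof. by case: c => a b; exact: sqrtr_ge0. Qed.

Lemma normc_real (r : R) : normc r%:C = `|r|.
Proof. by rewrite /Normc.normc /= expr0n /= addr0 sqrtr_sqr. Qed.

Lemma sqr_normcE c : (normc c ^+ 2)%:C = c * Num.conj c.
Proof. by rewrite rmorphXn; exact: normCK. Qed.

Lemma vnorm_ge0 x : 0 <= vnorm x.
Proof. exact: sqrtr_ge0. Qed.

Lemma ip_vnorm x : ip x x = (vnorm x ^+ 2)%:C.
Proof.
rewrite sqr_sqrtr ?sumr_ge0 // => [|k _]; last exact: sqr_ge0.
by rewrite rmorph_sum; apply: eq_bigr => k _; rewrite /= sqr_normcE.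
Qed.

Lemma vnormZ c x : vnorm (c *: x) = normc c * vnorm x.
Proof.
rewrite /vnorm; under eq_bigr do rewrite mxE Normc.normcM exprMn.
by rewrite -mulr_sumr sqrtrM ?sqr_ge0 // sqrtr_sqr ger0_norm ?normc_ge0.
Qed.

Lemma normc_ip_le x y : normc (ip x y) <= vnorm x * vnorm y.
Proof.
have triangle : normc (ip x y) <= \sum_k normc (x k 0) * normc (y k 0).
  rewrite -lecR -[(normc _)%:C]/`|ip x y| rmorph_sum.
  apply: le_trans (ler_norm_sum _ _ _) _.
  by apply: ler_sum => k _; rewrite normrM norm_conjC rmorphM.
apply: le_trans triangle _; rewrite /vnorm -sqrtrM; last first.
  by apply: sumr_ge0 => k _; exact: sqr_ge0.
rewrite -[X in X <= _]ger0_norm ?sumr_ge0 // => [|k _]; last first.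
  by rewrite mulr_ge0 ?normc_ge0.
by rewrite -sqrtr_sqr ler_wsqrtr // sum_mul_sqr_le.
Qed.

End InnerProduct.

Section Operators.
Variable R : realType.
Local Notation C := (R[i]).
Variable n : nat.

Lemma adjoint_mulmx (g f : 'cV[C]_n) : (map_mx Num.conj g)^T *m f = (ip f g)%:M.
Proof.
apply/matrixP => i j; rewrite !ord1 !mxE /ip.
by apply: eq_bigr => k _; rewrite !mxE mulrC.
Qed.

Lemma erasure_opE (fi gi f : 'cV[C]_n) : erasure_op fi gi *m f = ip f fi *: gi.
Proof. by rewrite /erasure_op -mulmxA adjoint_mulmx mul_mx_scalar. Qed.

Lemma frame_opE N (F : 'I_N -> 'cV[C]_n) f :
  frame_op F *m f = \sum_i ip f (F i) *: F i.
Proof. by rewrite /frame_op mulmx_suml; apply: eq_bigr => i _; exact: erasure_opE. Qed.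

(* Polarization: test the form on e_j + e_k and on e_j + i e_k. *)
Lemma quad_form_eq0 (M : 'M[C]_n) : (forall f, ip (M *m f) f = 0) -> M = 0.
Proof.
move=> M0; apply/matrixP => j k; rewrite mxE.
pose e l : 'cV[C]_n := delta_mx l 0.
have Me l m : ip (M *m e m) (e l) = M l m by rewrite ip_delta -colE mxE.
have Mll l : M l l = 0 by rewrite -Me M0.
have sym : M k j + M j k = 0.
  have := M0 (e j + e k).
  by rewrite mulmxDr !ipDl !ipDr !Me !Mll add0r addr0.
have skew : M j k - M k j = 0.
  have := M0 (e j + 'i *: e k).
  rewrite mulmxDr -scalemxAr !ipDl !ipDr !ipZl !ipZr !Me conjCi !Mll.
  rewrite !mulr0 add0r addr0 mulNr addrC -mulrBr => /eqP.
  by rewrite mulf_eq0 (negbTE (neq0Ci _)) => /eqP.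
have : M j k *+ 2 = (M k j + M j k) + (M j k - M k j) by ring.
by rewrite sym skew addr0 => /eqP; rewrite mulrn_eq0 => /eqP.
Qed.

Lemma tight_frame_opE N (F : 'I_N -> 'cV[C]_n) :
  tight_frame F -> exists2 A : R, 0 < A & frame_op F = A%:C%:M.
Proof.
case=> A [A_gt0 tightA]; exists A => //.
apply/subr0_eq/quad_form_eq0 => f.
rewrite mulmxBl ipBl mul_scalar_mx ipZl frame_opE ip_suml ip_vnorm -rmorphM /=.
rewrite -tightA rmorph_sum -sumrB big1 // => i _.
by rewrite ipZl -[ip (F i) f]conj_ip /= sqr_normcE subrr.
Qed.

Lemma canonical_dual_tight N (F : 'I_N -> 'cV[C]_n) :
  tight_frame F -> exists2 A : R, 0 < A & canonical_dual F = fun i => A^-1%:C *: F i.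
Proof.
case/tight_frame_opE=> A A_gt0 SA; exists A => //; apply: boolp.funext => i.
by rewrite /canonical_dual SA invmx_scalar mul_scalar_mx fmorphV.
Qed.

End Operators.

Section NumericalRadius.
Variable R : realType.
Local Notation C := (R[i]).
Local Notation normc := (@Normc.normc R).
Variable n : nat.
Implicit Types (T : 'M[C]_n) (f fi gi : 'cV[C]_n).

Lemma numrad_ge0 T : 0 <= numrad T.
Proof.
rewrite /numrad; set S := (X in sup X).
have [supS|/sup_out->//] := pselect (has_sup S).
have [[_ [f f1 _]] _] := supS.
by apply: le_trans (normc_ge0 _) (sup_upper_bound supS _); exists f.
Qed.

Lemma numrad_le T B : 0 <= B ->
  (forall f, vnorm f = 1 -> normc (ip (T *m f) f) <= B) -> numrad T <= B.
Proof.
move=> B_ge0 TB; rewrite /numrad; set S := (X in sup X).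
have [S0|/set0P/negP/negPn/eqP->] := pselect (S !=set0); last by rewrite sup0.
by apply: ge_sup => // _ [f f1 <-]; exact: TB.
Qed.

Lemma le_numrad T B f :
  (forall g, vnorm g = 1 -> normc (ip (T *m g) g) <= B) ->
  vnorm f = 1 -> normc (ip (T *m f) f) <= numrad T.
Proof.
move=> TB f1; apply: sup_upper_bound; last by exists f.
by split; [exists (normc (ip (T *m f) f)), f | exists B => _ [g g1 <-]; exact: TB].
Qed.

Lemma normc_ip_erasure_le fi gi f :
  vnorm f = 1 -> normc (ip (erasure_op fi gi *m f) f) <= vnorm fi * vnorm gi.
Proof.
move=> f1; rewrite erasure_opE ipZl Normc.normcM.
apply: ler_pM; rewrite ?normc_ge0 //.
  by apply: le_trans (normc_ip_le _ _) _; rewrite f1 mul1r.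
by apply: le_trans (normc_ip_le _ _) _; rewrite f1 mulr1.
Qed.

Lemma numrad_erasure_le fi gi : numrad (erasure_op fi gi) <= vnorm fi * vnorm gi.
Proof.
by apply: numrad_le; [rewrite mulr_ge0 ?vnorm_ge0 | exact: normc_ip_erasure_le].
Qed.

Lemma numrad_erasure_scaled fi (a : R) : 0 <= a ->
  numrad (erasure_op fi (a%:C *: fi)) = vnorm fi * vnorm (a%:C *: fi).
Proof.
move=> a_ge0; apply/le_anti; rewrite numrad_erasure_le /=.
rewrite vnormZ normc_real ger0_norm //; set r := vnorm fi.
have [->|r_neq0] := eqVneq r 0; first by rewrite mul0r numrad_ge0.
have r_gt0 : 0 < r by rewrite lt_def r_neq0 vnorm_ge0.
pose u := r^-1%:C *: fi.
have u1 : vnorm u = 1.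
  by rewrite vnormZ normc_real gtr0_norm ?invr_gt0 // mulVf.
apply: le_trans _ (le_numrad (normc_ip_erasure_le fi (a%:C *: fi)) u1).
rewrite erasure_opE /u !ipZl ipZr ip_vnorm (conjc_real _ : Num.conj _ = _) -/r.
by rewrite -!rmorphM normc_real expr2 mulKf // ler_norm.
Qed.

End NumericalRadius.

Section AverageError.
Variable R : realType.
Local Notation C := (R[i]).

Definition pmean (p : R) N (a : 'I_N -> R) : R :=
  (N%:R^-1 * \sum_(i < N) a i `^ p) `^ p^-1.

Lemma ler_pmean (p : R) N (a b : 'I_N -> R) : 0 < p ->
  (forall i, 0 <= a i) -> (forall i, a i <= b i) -> pmean p a <= pmean p b.
Proof.
move=> p_gt0 a_ge0 le_ab.
have N_ge0 : 0 <= (N%:R : R)^-1 by rewrite invr_ge0 ler0n.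
apply: ge0_ler_powR; rewrite ?invr_ge0 ?(ltW p_gt0) ?nnegrE //.
- by rewrite mulr_ge0 // sumr_ge0 // => i _; rewrite powR_ge0.
- by rewrite mulr_ge0 // sumr_ge0 // => i _; rewrite powR_ge0.
apply: ler_wpM2l => //; apply: ler_sum => i _.
by apply: ge0_ler_powR; rewrite ?(ltW p_gt0) ?nnegrE // (le_trans (a_ge0 i)).
Qed.

Variables (p : R) (n N : nat) (F : 'I_N -> 'cV[C]_n).

Lemma AE_num_le_frob G : 0 < p -> AE_num p F G <= AE_frob p F G.
Proof.
move=> p_gt0; rewrite /AE_num /AE_frob -!/(pmean _ _).
by apply: ler_pmean => // i; [exact: numrad_ge0 | exact: numrad_erasure_le].
Qed.

Lemma AE_num_scaled_frame (a : R) : 0 <= a ->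
  AE_num p F (fun i => a%:C *: F i) = AE_frob p F (fun i => a%:C *: F i).
Proof.
move=> a_ge0; rewrite /AE_num /AE_frob.
by under eq_bigr do rewrite numrad_erasure_scaled //.
Qed.

End AverageError.

Theorem proposition4p3 (R : realType) (n N : nat) (F : 'I_N -> 'cV[R[i]]_n)
  (p : R) :
  tight_frame F -> 1 < p ->
  zeta_num p F (canonical_dual F) -> zeta_frob p F (canonical_dual F).
Proof.
move=> tightF p_gt1 [dualF minimal].
have [A A_gt0 dualE] := canonical_dual_tight tightF.
rewrite dualE in dualF minimal *; split=> [//|G dualG].
have p_gt0 : 0 < p := lt_trans ltr01 p_gt1.
have invA_ge0 : 0 <= A^-1 by rewrite invr_ge0 ltW.
rewrite -(AE_num_scaled_frame p F invA_ge0).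
exact: le_trans (minimal G dualG) (AE_num_le_frob F G p_gt0).
Qed.
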